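(* Let $\widetilde{\mathsf{Op}}$ be the GPT associated with an operational theory, and for every system $X$ fix a linearly independent spanning set of states $\{\widetilde P^X_j\}_{j=1}^{m^X}$ and of effects $\{\widetilde E^X_i\}_{i=1}^{m^X}$. For a process $\widetilde T:A\to B$ let $\mathbf{N}_{\widetilde T}$ be the $m^B\times m^A$ matrix with entries $(\mathbf{N}_{\widetilde T})_{k,j}:=\widetilde E^B_k\circ\widetilde T\circ\widetilde P^A_j$, let $\mathbf{M}_{\widetilde{\mathbb 1}_X}:=\mathbf{N}_{\widetilde{\mathbb 1}_X}^{-1}$ (where $\widetilde{\mathbb 1}_X$ is the identity on $X$), and let $\mathbf{M}_{\widetilde T}:=\mathbf{M}_{\widetilde{\mathbb 1}_B}\mathbf{N}_{\widetilde T}\mathbf{M}_{\widetilde{\mathbb 1}_A}$ (matrix products). Then $\widetilde{\mathsf{Op}}$ is tomographically local if and only if every process $\widetilde T:A\to B$ decomposes as $$\widetilde T=\sum_{i=1}^{m^A}\sum_{l=1}^{m^B}(\mathbf{M}_{\widetilde T})_{l,i}\;\widetilde P^B_l\circ\widetilde E^A_i .$$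
   Context: A process theory consists of systems (closed under composition $\otimes$, with trivial system $I$) and processes, closed under sequential composition $\circ$ and parallel composition $\otimes$, with identities; processes $I\to A$ are states, $A\to I$ effects. An operational theory is a process theory of procedures with a probability rule $p$ assigning each closed diagram a value in $[0,1]$; procedures are operationally equivalent if they yield equal probabilities in every tester $\tau=(s,e,W)$ ($s:I\to A\otimes W$, $e:B\otimes W\to I$, giving $e\circ(T\otimes\mathrm{id}_W)\circ s$); finitely many testers suffice for each type. The associated GPT $\widetilde{\mathsf{Op}}$ has as processes the equivalence classes, composed via representatives; closed diagrams are real numbers; each class of type $A\to B$ is identified with its vector of probabilities on a finite tomographically complete set of testers, so linear combinations of processes are meaningful and composition extends bilinearly. For a system $X$ the states span a space of dimension $m^X$, as do the effects; a linearly independent spanning set of states (effects) is a basis of this span consisting of states (effects); the matrices $\mathbf{N}_{\widetilde{\mathbb 1}_X}$ are invertible. For an effect $E$ on $A$ and state $P$ of $B$, $P\circ E$ is the process $A\to B$ through the trivial system. $\widetilde{\mathsf{Op}}$ is tomographically local if any two processes of the same type (possibly with several input and output systems) giving equal probabilities for all products of states on the inputs and products of effects on the outputs are equal. *)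

(* An abstract (linearly extended) GPT, strictified:
   systems are finite lists of atomic systems, [::] is the trivial system I
   and the parallel composition of systems is list concatenation. *)
From HB Require Import structures.
From mathcomp Require Import all_boot all_order all_algebra.
From mathcomp Require Import reals.

Set Implicit Arguments.
Unset Strict Implicit.
Unset Printing Implicit Defensive.

Import GRing.Theory Num.Theory.
Local Open Scope ring_scope.

Record GPT (R : realType) := {
  Atom : Type;
  Proc : seq Atom -> seq Atom -> vectType R;
  seqc : forall {A B C : seq Atom}, Proc B C -> Proc A B -> Proc A C;
  parc : forall {A B C D : seq Atom}, Proc A B -> Proc C D -> Proc (A ++ C) (B ++ D);
  idp : forall (A : seq Atom), Proc A A;
  num : Proc [::] [::] -> R;
  comp_linl : forall A B C (h : Proc A B) (a : R) (f g : Proc B C),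
      seqc (a *: f + g) h = a *: seqc f h + seqc g h;
  comp_linr : forall A B C (f : Proc B C) (a : R) (g h : Proc A B),
      seqc f (a *: g + h) = a *: seqc f g + seqc f h;
  par_linl : forall A B C D (h : Proc C D) (a : R) (f g : Proc A B),
      parc (a *: f + g) h = a *: parc f h + parc g h;
  par_linr : forall A B C D (f : Proc A B) (a : R) (g h : Proc C D),
      parc f (a *: g + h) = a *: parc f g + parc f h;
  compA : forall A B C D (f : Proc C D) (g : Proc B C) (h : Proc A B),
      seqc f (seqc g h) = seqc (seqc f g) h;
  comp_idl : forall A B (f : Proc A B), seqc (idp B) f = f;
  comp_idr : forall A B (f : Proc A B), seqc f (idp A) = f;
  par_interchange : forall A B C A' B' C' (f : Proc B C) (g : Proc A B)
      (h : Proc B' C') (k : Proc A' B'),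
      parc (seqc f g) (seqc h k) = seqc (parc f h) (parc g k);
  par_idp : forall A B, parc (idp A) (idp B) = idp (A ++ B);
  par_unitl : forall A B (f : Proc A B), parc (idp [::]) f = f;
  num_lin : forall (a : R) (x y : Proc [::] [::]), num (a *: x + y) = a * num x + num y;
  num_bij : bijective num;
  num_comp : forall x y : Proc [::] [::], num (seqc x y) = num x * num y;
  num_par : forall x y : Proc [::] [::], num (parc x y) = num x * num y;
  num_id : num (idp [::]) = 1;
  (* processes are equivalence classes w.r.t. testers (s, e, W) *)
  tester_sep : forall A B (T T' : Proc A B),
      (forall (W : seq Atom) (s : Proc [::] (A ++ W)) (e : Proc (B ++ W) [::]),
          num (seqc e (seqc (parc T (idp W)) s))
          = num (seqc e (seqc (parc T' (idp W)) s))) -> T = T'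
}.

Arguments Atom {R}.
Arguments Proc {R}.
Arguments seqc {R G A B C} : rename.
Arguments parc {R G A B C D} : rename.
Arguments idp {R G} : rename.
Arguments num {R G} : rename.

Section Defs.
Variables (R : realType) (G : GPT R).

Fixpoint tensC (A : seq (Atom G)) (As : seq (seq (Atom G))) : seq (Atom G) :=
  match As with [::] => A | B :: Bs => A ++ tensC B Bs end.

Definition tensL (As : seq (seq (Atom G))) : seq (Atom G) :=
  match As with [::] => [::] | A :: As' => tensC A As' end.

Fixpoint prodstC (A : seq (Atom G)) (As : seq (seq (Atom G))) :
    Proc G [::] (tensC A As) -> Prop :=
  match As return Proc G [::] (tensC A As) -> Prop with
  | [::] => fun _ => True
  | B :: Bs => fun s => exists (a : Proc G [::] A) (b : Proc G [::] (tensC B Bs)),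
                  prodstC b /\ s = parc a b
  end.

Definition prod_state (As : seq (seq (Atom G))) : Proc G [::] (tensL As) -> Prop :=
  match As return Proc G [::] (tensL As) -> Prop with
  | [::] => fun s => s = idp [::]
  | A :: As' => @prodstC A As'
  end.

Fixpoint prodefC (A : seq (Atom G)) (As : seq (seq (Atom G))) :
    Proc G (tensC A As) [::] -> Prop :=
  match As return Proc G (tensC A As) [::] -> Prop with
  | [::] => fun _ => True
  | B :: Bs => fun e => exists (a : Proc G A [::]) (b : Proc G (tensC B Bs) [::]),
                  prodefC b /\ e = parc a b
  end.

Definition prod_effect (Bs : seq (seq (Atom G))) : Proc G (tensL Bs) [::] -> Prop :=
  match Bs return Proc G (tensL Bs) [::] -> Prop with
  | [::] => fun e => e = idp [::]
  | B :: Bs' => @prodefC B Bs'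
  end.

Definition tomographically_local : Prop :=
  forall (As Bs : seq (seq (Atom G))) (T T' : Proc G (tensL As) (tensL Bs)),
    (forall (s : Proc G [::] (tensL As)) (e : Proc G (tensL Bs) [::]),
        prod_state s -> prod_effect e ->
        num (seqc e (seqc T s)) = num (seqc e (seqc T' s))) ->
    T = T'.

Definition mdim (X : seq (Atom G)) : nat := \dim (fullv : {vspace Proc G [::] X}).

Variables (Pb : forall X, (mdim X).-tuple (Proc G [::] X))
          (Eb : forall X, (mdim X).-tuple (Proc G X [::])).

Definition Nmx A B (T : Proc G A B) : 'M[R]_(mdim B, mdim A) :=
  \matrix_(k < mdim B, j < mdim A) num (seqc (tnth (Eb B) k) (seqc T (tnth (Pb A) j))).

Definition Mid X : 'M[R]_(mdim X) := invmx (Nmx (idp X)).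

Definition Mmx A B (T : Proc G A B) : 'M[R]_(mdim B, mdim A) :=
  Mid B *m Nmx T *m Mid A.

End Defs.

Arguments mdim {R G} X.
Arguments tomographically_local {R} G.

(* The probabilities [E_k o T o P_j] fix [T] on all single states and
   effects by bilinearity, and the decomposition of [T] has the same
   probabilities (that is what [M_T] is built for), so tomographic locality
   with one input and one output system gives the decomposition.
   Conversely, decomposing the identity of X splits every state (effect) of
   X ⊗ Y into a combination of products [P_l ⊗ s'], so by induction on the
   number of factors a linear functional vanishing on product states
   (effects) vanishes identically.  Processes agreeing on products of states
   and effects therefore have the same probabilities, hence the same
   decomposition. *)
From Pilot Require Import Defs.
From HB Require Import structures.
From mathcomp Require Import all_boot all_order all_algebra.
From mathcomp Require Import reals.

Import GRing.Theory Num.Theory.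
Local Open Scope ring_scope.

Lemma scalar_eq0_on_span {K : fieldType} {V : vectType K} {n} (X : n.-tuple V)
    (f : {scalar V}) :
  <<X>>%VS = fullv -> (forall i, f (tnth X i) = 0) -> forall v, f v = 0.
Proof.
move=> spanX f0 v; have := memvf v; rewrite -spanX => /coord_span ->.
by rewrite linear_sum big1 // => i _; rewrite linearZ /= -tnth_nth f0 mulr0.
Qed.

Section Bilinearity.
Context {R : realType} {G : GPT R}.

Definition seqcr {A B C} (h : Proc G A B) (f : Proc G B C) : Proc G A C :=
  seqc f h.
Definition parcr {A B C D} (h : Proc G C D) (f : Proc G A B) :
  Proc G (A ++ C) (B ++ D) := parc f h.

HB.instance Definition _ A B C (f : Proc G B C) :=
  GRing.isLinear.Build R (Proc G A B) (Proc G A C) *:%R (seqc f) (comp_linr f).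
HB.instance Definition _ A B C (h : Proc G A B) :=
  GRing.isLinear.Build R (Proc G B C) (Proc G A C) *:%R (seqcr h) (comp_linl h).
HB.instance Definition _ A B C D (f : Proc G A B) :=
  GRing.isLinear.Build R (Proc G C D) (Proc G (A ++ C) (B ++ D)) *:%R
    (parc f) (par_linr f).
HB.instance Definition _ A B C D (h : Proc G C D) :=
  GRing.isLinear.Build R (Proc G A B) (Proc G (A ++ C) (B ++ D)) *:%R
    (parcr h) (par_linl h).
HB.instance Definition _ :=
  GRing.isLinear.Build R (Proc G [::] [::]) R *%R num (@num_lin R G).

Lemma seqc_suml A B C (h : Proc G A B) (I : Type) (r : seq I) (P : pred I)
    (F : I -> Proc G B C) :
  seqc (\sum_(i <- r | P i) F i) h = \sum_(i <- r | P i) seqc (F i) h.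
Proof. exact: (linear_sum (seqcr h)). Qed.

Lemma seqcZl A B C (h : Proc G A B) a (f : Proc G B C) :
  seqc (a *: f) h = a *: seqc f h.
Proof. exact: (linearZZ (seqcr h)). Qed.

Lemma seqcBl A B C (h : Proc G A B) (f g : Proc G B C) :
  seqc (f - g) h = seqc f h - seqc g h.
Proof. exact: (linearB (seqcr h)). Qed.

Lemma parc_suml A B C D (h : Proc G C D) (I : Type) (r : seq I) (P : pred I)
    (F : I -> Proc G A B) :
  parc (\sum_(i <- r | P i) F i) h = \sum_(i <- r | P i) parc (F i) h.
Proof. exact: (linear_sum (parcr h)). Qed.

Lemma parcZl A B C D (h : Proc G C D) a (f : Proc G A B) :
  parc (a *: f) h = a *: parc f h.
Proof. exact: (linearZZ (parcr h)). Qed.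

Lemma sandwichB A B (e : Proc G B [::]) (T T' : Proc G A B)
    (s : Proc G [::] A) :
  num (seqc e (seqc (T - T') s))
  = num (seqc e (seqc T s)) - num (seqc e (seqc T' s)).
Proof. by rewrite seqcBl !linearB. Qed.

Lemma closed_diagramE (x : Proc G [::] [::]) : x = num x *: idp [::].
Proof.
have [g numK _] := num_bij G; apply: (can_inj numK).
by rewrite linearZ /= num_id mulr1.
Qed.

Lemma seqc_parc_state X Y (p : Proc G [::] X) (b : Proc G [::] Y) :
  seqc (parc p (idp Y)) b = parc p b.
Proof.
have := par_interchange p (idp [::]) (idp Y) b.
by rewrite comp_idr comp_idl par_unitl.
Qed.

Lemma seqc_parc_effect X Y (q : Proc G X [::]) (e : Proc G Y [::]) :
  seqc e (parc q (idp Y)) = parc q e.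
Proof.
have := par_interchange (idp [::]) q e (idp Y).
by rewrite comp_idr comp_idl par_unitl.
Qed.

End Bilinearity.

Section ProbabilityMatrices.
Context {R : realType} {G : GPT R}
  {Pb : forall X : seq (Atom G), (mdim X).-tuple (Proc G [::] X)}
  {Eb : forall X : seq (Atom G), (mdim X).-tuple (Proc G X [::])}.

Local Notation P X l := (tnth (Pb X) l).
Local Notation E X i := (tnth (Eb X) i).
Local Notation Nmx := (Nmx Pb Eb).
Local Notation Mmx := (Mmx Pb Eb).

Definition mxproc {A B} (C : 'M[R]_(mdim B, mdim A)) : Proc G A B :=
  \sum_(i < mdim A) \sum_(l < mdim B) C l i *: seqc (P B l) (E A i).

Lemma mxproc0 A B : mxproc (0 : 'M_(mdim B, mdim A)) = 0.
Proof.
by rewrite /mxproc big1 // => i _; rewrite big1 // => l _; rewrite mxE scale0r.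
Qed.

Lemma NmxB A B (T T' : Proc G A B) : Nmx (T - T') = Nmx T - Nmx T'.
Proof. by apply/matrixP => k j; rewrite !mxE sandwichB. Qed.

Lemma Nmx_mxproc A B (C : 'M_(mdim B, mdim A)) :
  Nmx (mxproc C) = Nmx (idp B) *m C *m Nmx (idp A).
Proof.
apply/matrixP => k j; rewrite !mxE seqc_suml !linear_sum; apply: eq_bigr => i _.
rewrite !mxE mulr_suml seqc_suml !linear_sum; apply: eq_bigr => l _.
rewrite seqcZl !linearZ /= !mxE !comp_idl -Defs.compA Defs.compA num_comp.
by rewrite mulrCA mulrA.
Qed.

Lemma Nmx_mxproc_Mmx (hN : forall X, Nmx (idp X) \in unitmx) A B
    (T : Proc G A B) :
  Nmx (mxproc (Mmx T)) = Nmx T.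
Proof. by rewrite Nmx_mxproc /Mmx /Mid !mulmxA mulmxKV // mulmxV // mul1mx. Qed.

Lemma sandwich_eq0_of_Nmx0 (hPb : forall X, basis_of fullv (Pb X))
    (hEb : forall X, basis_of fullv (Eb X)) A B (D : Proc G A B) :
  Nmx D = 0 -> forall s e, num (seqc e (seqc D s)) = 0.
Proof.
move=> ND s e; move: s.
apply: (scalar_eq0_on_span _ (num \o seqc e \o seqc D)).
  exact: span_basis.
move=> j /=; move: e.
apply: (scalar_eq0_on_span _ (num \o seqcr (seqc D (P A j)))).
  exact: span_basis.
by move=> k; move/matrixP/(_ k j): ND; rewrite !mxE.
Qed.

Lemma tomographically_local_mxprocE (hPb : forall X, basis_of fullv (Pb X))
    (hEb : forall X, basis_of fullv (Eb X))
    (hN : forall X, Nmx (idp X) \in unitmx) :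
  tomographically_local G -> forall A B (T : Proc G A B), T = mxproc (Mmx T).
Proof.
move=> TL A B T.
(* With a single input and a single output system, every state and every
   effect is a product. *)
apply: (TL [:: A] [:: B]) => s e _ _.
apply/eqP; rewrite -subr_eq0 -sandwichB; apply/eqP.
by apply: sandwich_eq0_of_Nmx0 => //; rewrite NmxB Nmx_mxproc_Mmx // subrr.
Qed.

Section IdentityDecomposition.
Hypothesis idp_mxproc : forall X, idp X = mxproc (Mmx (idp X)).

Lemma state_split {X Y} (s : Proc G [::] (X ++ Y)) :
  s = \sum_(i < mdim X) \sum_(l < mdim X)
        Mmx (idp X) l i *: parc (P X l) (seqc (parc (E X i) (idp Y)) s).
Proof.
transitivity (seqc (parc (idp X) (idp Y)) s); first by rewrite par_idp comp_idl.
rewrite {1}idp_mxproc /mxproc parc_suml seqc_suml; apply: eq_bigr => i _.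
rewrite parc_suml seqc_suml; apply: eq_bigr => l _.
rewrite parcZl seqcZl -{1}(comp_idl (idp Y)) par_interchange -Defs.compA.
by rewrite seqc_parc_state.
Qed.

Lemma effect_split {X Y} (e : Proc G (X ++ Y) [::]) :
  e = \sum_(i < mdim X) \sum_(l < mdim X)
        Mmx (idp X) l i *: parc (E X i) (seqc e (parc (P X l) (idp Y))).
Proof.
transitivity (seqc e (parc (idp X) (idp Y))); first by rewrite par_idp comp_idr.
rewrite {1}idp_mxproc /mxproc parc_suml linear_sum; apply: eq_bigr => i _.
rewrite parc_suml linear_sum; apply: eq_bigr => l _.
rewrite parcZl linearZ /= -{1}(comp_idl (idp Y)) par_interchange Defs.compA.
by rewrite seqc_parc_effect.
Qed.

Lemma prodstC_separating As : forall A (f : {scalar Proc G [::] (tensC A As)}),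
  (forall s, prodstC s -> f s = 0) -> forall s, f s = 0.
Proof.
elim: As => [|B Bs IH] A f f0 s; first exact: f0.
have f_parc l b : f (parc (P A l) b) = 0.
  apply: (IH B (f \o (parc (P A l) : {linear _ -> _}))) => {}b pb.
  by apply: f0; exists (P A l), b.
rewrite (state_split s) linear_sum big1 // => i _.
by rewrite linear_sum big1 // => l _; rewrite linearZ /= f_parc mulr0.
Qed.

Lemma prodefC_separating As : forall A (f : {scalar Proc G (tensC A As) [::]}),
  (forall e, prodefC e -> f e = 0) -> forall e, f e = 0.
Proof.
elim: As => [|B Bs IH] A f f0 e; first exact: f0.
have f_parc i b : f (parc (E A i) b) = 0.
  apply: (IH B (f \o (parc (E A i) : {linear _ -> _}))) => {}b pb.
  by apply: f0; exists (E A i), b.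
rewrite (effect_split e) linear_sum big1 // => i _.
by rewrite linear_sum big1 // => l _; rewrite linearZ /= f_parc mulr0.
Qed.

Lemma prod_state_separating {As} (f : {scalar Proc G [::] (tensL As)}) :
  (forall s, prod_state s -> f s = 0) -> forall s, f s = 0.
Proof.
case: As f => [|A As] f f0 s; last exact: prodstC_separating.
by rewrite (closed_diagramE s) linearZ /= f0 ?mulr0.
Qed.

Lemma prod_effect_separating {Bs} (f : {scalar Proc G (tensL Bs) [::]}) :
  (forall e, prod_effect e -> f e = 0) -> forall e, f e = 0.
Proof.
case: Bs f => [|B Bs] f f0 e; last exact: prodefC_separating.
by rewrite (closed_diagramE e) linearZ /= f0 ?mulr0.
Qed.

Lemma sandwich_eq0_of_prod As Bs (D : Proc G (tensL As) (tensL Bs)) :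
  (forall s e, prod_state s -> prod_effect e -> num (seqc e (seqc D s)) = 0) ->
  forall s e, num (seqc e (seqc D s)) = 0.
Proof.
move=> D0 s e; move: e.
apply: (prod_effect_separating (num \o seqcr (seqc D s))) => e pe; move: s.
by apply: (prod_state_separating (num \o seqc e \o seqc D)) => s ps; apply: D0.
Qed.

End IdentityDecomposition.

Lemma mxprocE_tomographically_local :
  (forall A B (T : Proc G A B), T = mxproc (Mmx T)) -> tomographically_local G.
Proof.
move=> decomp As Bs T T' agree; apply/eqP; rewrite -subr_eq0; apply/eqP.
have ND : Nmx (T - T') = 0.
  apply/matrixP => k j; rewrite !mxE.
  apply: (sandwich_eq0_of_prod (fun X => decomp X X (idp X))) => s e ps pe.
  by rewrite sandwichB agree // subrr.
by rewrite (decomp _ _ (T - T')) /Mmx ND mulmx0 mul0mx mxproc0.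
Qed.

End ProbabilityMatrices.

Theorem corollary1 (R : realType) (G : GPT R)
    (Pb : forall X : seq (Atom G), (mdim X).-tuple (Proc G [::] X))
    (Eb : forall X : seq (Atom G), (mdim X).-tuple (Proc G X [::]))
    (hPb : forall X, basis_of fullv (Pb X))
    (hEb : forall X, basis_of fullv (Eb X))
    (hN : forall X, Nmx Pb Eb (idp X) \in unitmx) :
  tomographically_local G <->
  (forall (A B : seq (Atom G)) (T : Proc G A B),
     T = \sum_(i < mdim A) \sum_(l < mdim B)
           (Mmx Pb Eb T) l i *: seqc (tnth (Pb B) l) (tnth (Eb A) i)).
Proof.
split; first exact: (tomographically_local_mxprocE hPb hEb hN).
exact: mxprocE_tomographically_local.
Qed.
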